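(* Let $P$ and $Q$ be posets such that $\Sigma P$ and $\Sigma Q$ are $\omega$ type spaces. Then the product topology of $\Sigma\sigma(P)$ and $\Sigma\sigma(Q)$ coincides with the Scott topology of the product poset $\sigma(P)\times\sigma(Q)$, i.e. $\Sigma\sigma(P)\times\Sigma\sigma(Q)=\Sigma(\sigma(P)\times\sigma(Q))$.
   Context: For a poset $P$, $\sigma(P)$ is the set of Scott open subsets of $P$ (a set $U$ is Scott open iff it is an upper set and for every directed $D$ whose supremum exists, $\bigvee D\in U$ implies $D\cap U\neq\emptyset$), and $\Sigma P=(P,\sigma(P))$. $\sigma(P)$ is ordered by inclusion, $\Sigma\sigma(P)$ is this poset with its Scott topology, and $\sigma(P)\times\sigma(Q)$ carries the coordinatewise order. A topological space is an $\omega$ type space if it has a subbase consisting of countable subsets. *)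

(* Sets are predicates X -> Prop;
   a topology on X is the family of its open sets, (X -> Prop) -> Prop. *)
From Stdlib Require Import List.

Set Implicit Arguments.

Definition is_poset (T : Type) (le : T -> T -> Prop) : Prop :=
  (forall x, le x x) /\
  (forall x y, le x y -> le y x -> x = y) /\
  (forall x y z, le x y -> le y z -> le x z).

Definition upper_set (T : Type) (le : T -> T -> Prop) (U : T -> Prop) : Prop :=
  forall x y, U x -> le x y -> U y.

Definition directed (T : Type) (le : T -> T -> Prop) (D : T -> Prop) : Prop :=
  (exists x, D x) /\
  (forall x y, D x -> D y -> exists z, D z /\ le x z /\ le y z).

Definition is_sup (T : Type) (le : T -> T -> Prop) (D : T -> Prop) (s : T) : Prop :=
  (forall x, D x -> le x s) /\
  (forall u, (forall x, D x -> le x u) -> le s u).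

Definition scott_open (T : Type) (le : T -> T -> Prop) (U : T -> Prop) : Prop :=
  upper_set le U /\
  (forall (D : T -> Prop) (s : T), directed le D -> is_sup le D s -> U s ->
     exists x, D x /\ U x).

Definition sigmaP (T : Type) (le : T -> T -> Prop) : Type :=
  { U : T -> Prop | scott_open le U }.

Definition incl (T : Type) (le : T -> T -> Prop) (U V : sigmaP le) : Prop :=
  forall x, proj1_sig U x -> proj1_sig V x.

Definition prod_le (X Y : Type) (r1 : X -> X -> Prop) (r2 : Y -> Y -> Prop)
  (a b : X * Y) : Prop := r1 (fst a) (fst b) /\ r2 (snd a) (snd b).

Definition product_topology (X Y : Type) (t1 : (X -> Prop) -> Prop)
  (t2 : (Y -> Prop) -> Prop) (W : X * Y -> Prop) : Prop :=
  forall p, W p -> exists U V, t1 U /\ t2 V /\ U (fst p) /\ V (snd p) /\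
    (forall x y, U x -> V y -> W (x, y)).

(* the topology generated by a family S as a subbase: unions of finite
   intersections of members of S (the empty intersection being the whole space) *)
Definition generated_by (X : Type) (S : (X -> Prop) -> Prop) (W : X -> Prop) : Prop :=
  forall x, W x -> exists l : list (X -> Prop),
    (forall A, In A l -> S A) /\ (forall A, In A l -> A x) /\
    (forall y, (forall A, In A l -> A y) -> W y).

Definition is_subbase (X : Type) (t : (X -> Prop) -> Prop) (S : (X -> Prop) -> Prop) : Prop :=
  forall W, t W <-> generated_by S W.

Definition countable_set (X : Type) (A : X -> Prop) : Prop :=
  exists f : nat -> X, forall x, A x -> exists n, f n = x.

Definition omega_type (X : Type) (t : (X -> Prop) -> Prop) : Prop :=
  exists S, is_subbase t S /\ forall A, S A -> countable_set A.

From Stdlib Require Import List Classical ClassicalEpsilon PeanoNat Lia.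

(* Boxes of Scott-open sets are Scott open in any product, so only the converse needs work.
   Let W be Scott open in σ(P) × σ(Q) with (U, V) ∈ W.  In an ω type space every point of an
   open set U has a countable open neighbourhood inside U, unless U contains a point x whose
   only open neighbourhood is the whole space; then {A | x ∈ A} is a Scott-open neighbourhood
   of U lying above U, and a box around (U, V) is immediate.  Otherwise U is the directed union
   of its countable open subsets, so W contains some (C, V) with C ⊆ U countable, and likewise
   some (C, D) with D ⊆ V countable.  Enumerate C and D and let N_n(C) be the Scott-open set of
   those A containing the first n points of C.  Some N_n(C) × N_n(D) lies in W: otherwise pick
   (A_n, B_n) ∈ N_n(C) × N_n(D) outside W.  Every point of C lies in all but finitely many A_k,
   which makes G_n = C ∩ ⋂_{k ≥ n} A_k Scott open; the G_n increase to C and the analogous H_n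
   increase to D, so some (G_n, H_n), and with it (A_n, B_n), lies in W. *)

Set Implicit Arguments.
Unset Strict Implicit.

Definition image (X Y : Type) (f : X -> Y) (D : X -> Prop) (y : Y) : Prop :=
  exists x, D x /\ f x = y.

Definition range (Y : Type) (a : nat -> Y) (y : Y) : Prop := exists n, a n = y.

(* [option] makes the empty set of an empty type enumerable, unlike [countable_set]. *)
Definition enumerable (T : Type) (K : T -> Prop) : Prop :=
  exists e : nat -> option T, forall x, K x -> exists n, e n = Some x.

Lemma enumerable_False (T : Type) : enumerable (fun _ : T => False).
Proof. exists (fun _ => None). intros x []. Qed.

Lemma enumerable_or (T : Type) (K L : T -> Prop) :
  enumerable K -> enumerable L -> enumerable (fun x => K x \/ L x).
Proof.
  intros [e He] [f Hf].
  exists (fun n => if Nat.even n then e (Nat.div2 n) else f (Nat.div2 n)).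
  intros x [Kx | Lx].
  - destruct (He x Kx) as [m Hm]. exists (2 * m).
    rewrite Nat.even_even, Nat.div2_double. exact Hm.
  - destruct (Hf x Lx) as [m Hm]. exists (2 * m + 1).
    rewrite Nat.even_odd, Nat.div2_odd'. exact Hm.
Qed.

Section ScottOpen.

Variables (T : Type) (le : T -> T -> Prop).

Lemma scott_open_False : scott_open le (fun _ => False).
Proof. split; [intros x y [] | intros D s _ _ []]. Qed.

Lemma scott_open_or (O O' : T -> Prop) :
  scott_open le O -> scott_open le O' -> scott_open le (fun x => O x \/ O' x).
Proof.
  intros [HuO HcO] [HuO' HcO']. split.
  - intros x y [Ox | Ox] hxy; [left | right]; eauto.
  - intros D s HD Hs [Os | Os].
    + destruct (HcO D s HD Hs Os) as [d [Dd Od]]. eauto.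
    + destruct (HcO' D s HD Hs Os) as [d [Dd Od]]. eauto.
Qed.

Lemma scott_open_and (O O' : T -> Prop) :
  scott_open le O -> scott_open le O' -> scott_open le (fun x => O x /\ O' x).
Proof.
  intros [HuO HcO] [HuO' HcO']. split.
  - intros x y [Ox O'x] hxy. split; eauto.
  - intros D s HD Hs [Os O's].
    destruct (HcO D s HD Hs Os) as [a [Da Oa]].
    destruct (HcO' D s HD Hs O's) as [b [Db O'b]].
    destruct (proj2 HD a b Da Db) as [z [Dz [az bz]]].
    exists z. split; [exact Dz | split; eauto].
Qed.

Lemma scott_open_impl (R : Prop) (O : T -> Prop) :
  scott_open le O -> scott_open le (fun x => R -> O x).
Proof.
  intros [HuO HcO]. split.
  - intros x y Ox hxy r. eauto.
  - intros D s HD Hs Os. destruct (classic R) as [r | nr].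
    + destruct (HcO D s HD Hs (Os r)) as [d [Dd Od]]. eauto.
    + destruct (proj1 HD) as [d Dd]. exists d. split; [exact Dd | intros r; contradiction].
Qed.

Lemma scott_open_forall_lt (O : nat -> T -> Prop) (m : nat) :
  (forall i, scott_open le (O i)) -> scott_open le (fun x => forall i, i < m -> O i x).
Proof.
  intros HO. split.
  - intros x y Ox hxy i hi. apply (proj1 (HO i)) with x; auto.
  - intros D s HD Hs Os. induction m as [|m IH].
    + destruct (proj1 HD) as [d Dd]. exists d. split; [exact Dd | intros i hi; lia].
    + destruct IH as [a [Da Oa]]; [intros i hi; apply Os; lia |].
      destruct (proj2 (HO m) D s HD Hs (Os m (Nat.lt_succ_diag_r m))) as [b [Db Ob]].
      destruct (proj2 HD a b Da Db) as [z [Dz [az bz]]].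
      exists z. split; [exact Dz |]. intros i hi.
      destruct (Nat.eq_dec i m) as [-> | ne].
      * apply (proj1 (HO m)) with b; auto.
      * apply (proj1 (HO i)) with a; auto. apply Oa. lia.
Qed.

Lemma directed_increasing (a : nat -> T) :
  (forall n m, n <= m -> le (a n) (a m)) -> directed le (range a).
Proof.
  intros Ha. split.
  - exists (a 0), 0. reflexivity.
  - intros x y [n <-] [m <-]. exists (a (Nat.max n m)).
    split; [exists (Nat.max n m); reflexivity | split; apply Ha; lia].
Qed.

Definition eventually_covers (A : nat -> T -> Prop) (C : T -> Prop) : Prop :=
  forall x, C x -> exists j, forall k, j <= k -> A k x.

Definition tail_inter (C : T -> Prop) (A : nat -> T -> Prop) (n : nat) (x : T) : Prop :=
  C x /\ forall k, n <= k -> A k x.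

Lemma tail_inter_mono (C : T -> Prop) (A : nat -> T -> Prop) (n m : nat) (x : T) :
  n <= m -> tail_inter C A n x -> tail_inter C A m x.
Proof. intros hnm [Cx Ax]. split; [exact Cx | intros k hk; apply Ax; lia]. Qed.

Lemma scott_open_tail_inter (C : T -> Prop) (A : nat -> T -> Prop) (n : nat) :
  scott_open le C -> (forall k, scott_open le (A k)) -> eventually_covers A C ->
  scott_open le (tail_inter C A n).
Proof.
  intros HC HA Hev. split.
  - intros x y [Cx Ax] hxy. split.
    + apply (proj1 HC) with x; auto.
    + intros k hk. apply (proj1 (HA k)) with x; auto.
  - intros D s HD Hs [Cs As].
    destruct (proj2 HC D s HD Hs Cs) as [d0 [Dd0 Cd0]].
    destruct (Hev d0 Cd0) as [j Hj].
    (* Only the finitely many [A k] with [n <= k < j] are not already met at [d0]. *)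
    assert (Hfin : scott_open le (fun x => forall k, k < j -> n <= k -> A k x)).
    { apply scott_open_forall_lt. intros k. apply scott_open_impl, HA. }
    destruct (proj2 Hfin D s HD Hs (fun k _ hk => As k hk)) as [d1 [Dd1 Ad1]].
    destruct (proj2 HD d0 d1 Dd0 Dd1) as [z [Dz [d0z d1z]]].
    exists z. split; [exact Dz | split].
    + apply (proj1 HC) with d0; auto.
    + intros k hk. destruct (Nat.lt_ge_cases k j) as [hkj | hjk].
      * apply (proj1 (HA k)) with d1; auto.
      * apply (proj1 (HA k)) with d0; auto.
Qed.

End ScottOpen.

Section SigmaP.

Variables (T : Type) (le : T -> T -> Prop).

Lemma incl_refl (A : sigmaP le) : incl A A.
Proof. intros x Ax. exact Ax. Qed.

Lemma scott_open_sigma_union (F : sigmaP le -> Prop) :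
  scott_open le (fun x => exists A, F A /\ proj1_sig A x).
Proof.
  split.
  - intros x y [A [FA Ax]] hxy. exists A. split; [exact FA |].
    apply (proj1 (proj2_sig A)) with x; auto.
  - intros D s HD Hs [A [FA As]].
    destruct (proj2 (proj2_sig A) D s HD Hs As) as [x [Dx Ax]]. eauto.
Qed.

Lemma is_sup_sigma_mem (F : sigmaP le -> Prop) (S : sigmaP le) (x : T) :
  is_sup (@incl T le) F S -> proj1_sig S x -> exists A, F A /\ proj1_sig A x.
Proof.
  intros [_ HS] Sx.
  apply (HS (exist _ _ (scott_open_sigma_union F))); [| exact Sx].
  intros A FA y Ay. exists A. auto.
Qed.

Lemma is_sup_sigma_of_union (F : sigmaP le -> Prop) (S : sigmaP le) :
  (forall x, proj1_sig S x <-> exists A, F A /\ proj1_sig A x) ->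
  is_sup (@incl T le) F S.
Proof.
  intros HS. split.
  - intros A FA x Ax. apply HS. eauto.
  - intros Z HZ x Sx. destruct (proj1 (HS x) Sx) as [A [FA Ax]]. exact (HZ A FA x Ax).
Qed.

Lemma scott_open_sigma_mem (x : T) : scott_open (@incl T le) (fun A => proj1_sig A x).
Proof.
  split.
  - intros A B Ax AB. exact (AB x Ax).
  - intros D S HD HS Sx. exact (is_sup_sigma_mem HS Sx).
Qed.

Lemma scott_open_sigma_superset (F : T -> Prop) :
  (forall y z, F y -> F z -> y = z) ->
  scott_open (@incl T le) (fun A => forall y, F y -> proj1_sig A y).
Proof.
  intros HF. split.
  - intros A B FA AB y Fy. exact (AB y (FA y Fy)).
  - intros D S HD HS FS. destruct (classic (exists y, F y)) as [[y Fy] | nF].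
    + destruct (is_sup_sigma_mem HS (FS y Fy)) as [A [DA Ay]].
      exists A. split; [exact DA |]. intros z Fz. rewrite <- (HF y z Fy Fz). exact Ay.
    + destruct (proj1 HD) as [A DA]. exists A. split; [exact DA |].
      intros y Fy. exfalso. eauto.
Qed.

Definition prefix_nbhd (e : nat -> option T) (C : T -> Prop) (n : nat) (A : sigmaP le) : Prop :=
  forall i, i < n -> forall y, e i = Some y /\ C y -> proj1_sig A y.

Lemma scott_open_prefix_nbhd (e : nat -> option T) (C : T -> Prop) (n : nat) :
  scott_open (@incl T le) (prefix_nbhd e C n).
Proof.
  apply (scott_open_forall_lt (O := fun i A => forall y, e i = Some y /\ C y -> proj1_sig A y)).
  intros i. apply scott_open_sigma_superset. intros y z [ey _] [ez _]. congruence.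
Qed.

Lemma prefix_nbhd_of_incl (e : nat -> option T) (C : sigmaP le) (n : nat) (A : sigmaP le) :
  incl C A -> prefix_nbhd e (proj1_sig C) n A.
Proof. intros CA i _ y [_ Cy]. exact (CA y Cy). Qed.

Lemma prefix_nbhd_eventually_covers (e : nat -> option T) (C : T -> Prop) (A : nat -> sigmaP le) :
  (forall x, C x -> exists n, e n = Some x) -> (forall n, prefix_nbhd e C n (A n)) ->
  eventually_covers (fun n => proj1_sig (A n)) C.
Proof.
  intros He HA x Cx. destruct (He x Cx) as [j ej].
  exists (S j). intros k hk. apply (HA k j); [lia | auto].
Qed.

Section Tail.

Variables (C : sigmaP le) (A : nat -> sigmaP le).
Hypothesis Hev : eventually_covers (fun n => proj1_sig (A n)) (proj1_sig C).

Definition sigma_tail (n : nat) : sigmaP le :=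
  exist _ (tail_inter (proj1_sig C) (fun k => proj1_sig (A k)) n)
    (scott_open_tail_inter n (proj2_sig C) (fun k => proj2_sig (A k)) Hev).

Lemma sigma_tail_incl (n : nat) : incl (sigma_tail n) (A n).
Proof. intros x [_ Ax]. exact (Ax n (le_n n)). Qed.

Lemma sigma_tail_increasing (n m : nat) : n <= m -> incl (sigma_tail n) (sigma_tail m).
Proof. intros hnm x. exact (tail_inter_mono hnm). Qed.

Lemma is_sup_sigma_tail : is_sup (@incl T le) (range sigma_tail) C.
Proof.
  apply is_sup_sigma_of_union. intros x. split.
  - intros Cx. destruct (Hev Cx) as [j Hj].
    exists (sigma_tail j). split; [exists j; reflexivity | split; [exact Cx | exact Hj]].
  - intros [G [[n <-] [Cx _]]]. exact Cx.
Qed.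

End Tail.

Lemma omega_type_enumerable_nbhd (X : Type) (t : (X -> Prop) -> Prop) (U : X -> Prop) (x : X) :
  omega_type t -> t U -> U x ->
  (forall y, U y) \/ exists K, t K /\ enumerable K /\ K x /\ forall y, K y -> U y.
Proof.
  intros [S [HS HSc]] HU Ux.
  destruct (proj1 (HS U) HU x Ux) as [[| B l] [HlS [Hlx Hly]]].
  - left. intros y. apply Hly. intros A [].
  - right. exists (fun y => forall A, In A (B :: l) -> A y).
    split; [| split; [| split]].
    + apply (proj2 (HS _)). intros y Hy. exists (B :: l). auto.
    + destruct (HSc B (HlS B (or_introl eq_refl))) as [f Hf].
      exists (fun n => Some (f n)). intros y Hy.
      destruct (Hf y (Hy B (or_introl eq_refl))) as [n <-]. eauto.
    + exact Hlx.
    + exact Hly.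
Qed.

Definition enumerable_below (U K : sigmaP le) : Prop :=
  enumerable (proj1_sig K) /\ incl K U.

Lemma directed_enumerable_below (U : sigmaP le) : directed (@incl T le) (enumerable_below U).
Proof.
  split.
  - exists (exist _ _ (scott_open_False le)). split; [apply enumerable_False | intros x []].
  - intros K L [eK KU] [eL LU].
    exists (exist _ _ (scott_open_or (proj2_sig K) (proj2_sig L))).
    split; [split |].
    + exact (enumerable_or eK eL).
    + intros x [Kx | Lx]; auto.
    + split; intros x Hx; simpl; auto.
Qed.

Lemma is_sup_enumerable_below (U : sigmaP le) :
  (forall x, proj1_sig U x -> exists K, scott_open le K /\ enumerable K /\ K x /\
     forall y, K y -> proj1_sig U y) ->
  is_sup (@incl T le) (enumerable_below U) U.
Proof.
  intros HU. apply is_sup_sigma_of_union. intros x. split.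
  - intros Ux. destruct (HU x Ux) as [K [HK [eK [Kx KU]]]].
    exists (exist _ K HK). split; [split |]; auto.
  - intros [K [[_ KU] Kx]]. exact (KU x Kx).
Qed.

Lemma sigma_generic_point (U : sigmaP le) (x : T) :
  omega_type (scott_open le) -> proj1_sig U x ->
  ~ (exists K, scott_open le K /\ enumerable K /\ K x /\ forall y, K y -> proj1_sig U y) ->
  forall A : sigmaP le, proj1_sig A x -> incl U A.
Proof.
  intros oT Ux Hx A Ax y _.
  destruct (omega_type_enumerable_nbhd oT (scott_open_and (proj2_sig A) (proj2_sig U))
              (conj Ax Ux)) as [Hall | [K [HK [eK [Kx KAU]]]]].
  - exact (proj1 (Hall y)).
  - exfalso. apply Hx. exists K.
    split; [exact HK | split; [exact eK | split; [exact Kx |]]].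
    intros z Kz. exact (proj2 (KAU z Kz)).
Qed.

Lemma sigma_enumerable_below_or_generic (F : sigmaP le -> Prop) (U : sigmaP le) :
  omega_type (scott_open le) -> scott_open (@incl T le) F -> F U ->
  (exists x, proj1_sig U x /\ forall A : sigmaP le, proj1_sig A x -> incl U A) \/
  (exists C, F C /\ incl C U /\ enumerable (proj1_sig C)).
Proof.
  intros oT HF FU.
  destruct (classic (forall x, proj1_sig U x -> exists K, scott_open le K /\ enumerable K /\
                       K x /\ forall y, K y -> proj1_sig U y)) as [Hloc | Hnloc].
  - right.
    destruct (proj2 HF _ U (directed_enumerable_below U) (is_sup_enumerable_below Hloc) FU)
      as [C [[eC CU] FC]].
    eauto.
  - left. apply not_all_ex_not in Hnloc. destruct Hnloc as [x Hx].
    apply imply_to_and in Hx. destruct Hx as [Ux Hx].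
    exists x. split; [exact Ux | exact (sigma_generic_point oT Ux Hx)].
Qed.

End SigmaP.

Lemma directed_image (X Y : Type) (rX : X -> X -> Prop) (rY : Y -> Y -> Prop) (f : X -> Y)
  (D : X -> Prop) :
  (forall a b, rX a b -> rY (f a) (f b)) -> directed rX D -> directed rY (image f D).
Proof.
  intros Hf [[x Dx] HD]. split.
  - exists (f x), x. auto.
  - intros y1 y2 [x1 [D1 <-]] [x2 [D2 <-]].
    destruct (HD x1 x2 D1 D2) as [z [Dz [h1 h2]]].
    exists (f z). split; [exists z; auto | auto].
Qed.

Lemma scott_open_preimage (X Y : Type) (rX : X -> X -> Prop) (rY : Y -> Y -> Prop) (f : X -> Y)
  (O : Y -> Prop) :
  (forall a b, rX a b -> rY (f a) (f b)) ->
  (forall D s, directed rX D -> is_sup rX D s -> is_sup rY (image f D) (f s)) ->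
  scott_open rY O -> scott_open rX (fun x => O (f x)).
Proof.
  intros Hmono Hsup [HuO HcO]. split.
  - intros a b Oa hab. exact (HuO _ _ Oa (Hmono a b hab)).
  - intros D s HD Hs Os.
    destruct (HcO _ _ (directed_image Hmono HD) (Hsup D s HD Hs) Os) as [y [[x [Dx <-]] Ox]].
    eauto.
Qed.

Section Product.

Variables (X Y : Type) (r1 : X -> X -> Prop) (r2 : Y -> Y -> Prop).

Lemma is_sup_fst (D : X * Y -> Prop) (s : X * Y) :
  is_sup (prod_le r1 r2) D s -> is_sup r1 (image fst D) (fst s).
Proof.
  intros [Hub Hl]. split.
  - intros a [p [Dp <-]]. exact (proj1 (Hub p Dp)).
  - intros u Hu. apply (Hl (u, snd s)). intros p Dp.
    split; [apply Hu; exists p; auto | exact (proj2 (Hub p Dp))].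
Qed.

Lemma is_sup_snd (D : X * Y -> Prop) (s : X * Y) :
  is_sup (prod_le r1 r2) D s -> is_sup r2 (image snd D) (snd s).
Proof.
  intros [Hub Hl]. split.
  - intros b [p [Dp <-]]. exact (proj2 (Hub p Dp)).
  - intros u Hu. apply (Hl (fst s, u)). intros p Dp.
    split; [exact (proj1 (Hub p Dp)) | apply Hu; exists p; auto].
Qed.

Lemma is_sup_pair_l (v : Y) (D : X -> Prop) (s : X) :
  r2 v v -> (exists x, D x) -> is_sup r1 D s ->
  is_sup (prod_le r1 r2) (image (fun x => (x, v)) D) (s, v).
Proof.
  intros rv [x0 Dx0] [Hub Hl]. split.
  - intros p [x [Dx <-]]. split; [exact (Hub x Dx) | exact rv].
  - intros u Hu. split.
    + apply Hl. intros x Dx. exact (proj1 (Hu (x, v) (ex_intro _ x (conj Dx eq_refl)))).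
    + exact (proj2 (Hu (x0, v) (ex_intro _ x0 (conj Dx0 eq_refl)))).
Qed.

Lemma is_sup_pair_r (u : X) (D : Y -> Prop) (s : Y) :
  r1 u u -> (exists y, D y) -> is_sup r2 D s ->
  is_sup (prod_le r1 r2) (image (fun y => (u, y)) D) (u, s).
Proof.
  intros ru [y0 Dy0] [Hub Hl]. split.
  - intros p [y [Dy <-]]. split; [exact ru | exact (Hub y Dy)].
  - intros w Hw. split.
    + exact (proj1 (Hw (u, y0) (ex_intro _ y0 (conj Dy0 eq_refl)))).
    + apply Hl. intros y Dy. exact (proj2 (Hw (u, y) (ex_intro _ y (conj Dy eq_refl)))).
Qed.

Lemma is_sup_prod_range (a : nat -> X) (b : nat -> Y) (s1 : X) (s2 : Y) :
  is_sup r1 (range a) s1 -> is_sup r2 (range b) s2 ->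
  is_sup (prod_le r1 r2) (range (fun n => (a n, b n))) (s1, s2).
Proof.
  intros [Hub1 Hl1] [Hub2 Hl2]. split.
  - intros p [n <-]. split; [apply Hub1 | apply Hub2]; exists n; reflexivity.
  - intros u Hu. split; [apply Hl1 | apply Hl2]; intros x [n <-];
      apply (Hu (a n, b n)); exists n; reflexivity.
Qed.

Lemma scott_open_section_l (W : X * Y -> Prop) (v : Y) :
  r2 v v -> scott_open (prod_le r1 r2) W -> scott_open r1 (fun x => W (x, v)).
Proof.
  intros rv. apply (scott_open_preimage (f := fun x => (x, v))).
  - intros a b hab. split; [exact hab | exact rv].
  - intros D s HD Hs. exact (is_sup_pair_l rv (proj1 HD) Hs).
Qed.

Lemma scott_open_section_r (W : X * Y -> Prop) (u : X) :
  r1 u u -> scott_open (prod_le r1 r2) W -> scott_open r2 (fun y => W (u, y)).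
Proof.
  intros ru. apply (scott_open_preimage (f := fun y => (u, y))).
  - intros a b hab. split; [exact ru | exact hab].
  - intros D s HD Hs. exact (is_sup_pair_r ru (proj1 HD) Hs).
Qed.

Lemma product_topology_scott_open (W : X * Y -> Prop) :
  product_topology (scott_open r1) (scott_open r2) W -> scott_open (prod_le r1 r2) W.
Proof.
  intros HW. split.
  - intros p q Wp [h1 h2].
    destruct (HW p Wp) as [U [V [HU [HV [Up [Vp HUV]]]]]].
    rewrite (surjective_pairing q).
    apply HUV; [apply (proj1 HU) with (fst p) | apply (proj1 HV) with (snd p)]; auto.
  - intros D s HD Hs Ws.
    destruct (HW s Ws) as [U [V [HU [HV [Us [Vs HUV]]]]]].
    destruct (proj2 HU _ _ (directed_image (fun p q (h : prod_le r1 r2 p q) => proj1 h) HD)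
                (is_sup_fst Hs) Us) as [a [[p [Dp <-]] Ua]].
    destruct (proj2 HV _ _ (directed_image (fun p q (h : prod_le r1 r2 p q) => proj2 h) HD)
                (is_sup_snd Hs) Vs) as [b [[q [Dq <-]] Vb]].
    destruct (proj2 HD p q Dp Dq) as [z [Dz [[hp _] [_ hq]]]].
    exists z. split; [exact Dz |]. rewrite (surjective_pairing z).
    apply HUV; [apply (proj1 HU) with (fst p) | apply (proj1 HV) with (snd q)]; auto.
Qed.

End Product.

Definition box_nbhd (X Y : Type) (t1 : (X -> Prop) -> Prop) (t2 : (Y -> Prop) -> Prop)
  (W : X * Y -> Prop) (p : X * Y) : Prop :=
  exists U V, t1 U /\ t2 V /\ U (fst p) /\ V (snd p) /\ forall x y, U x -> V y -> W (x, y).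

Section SigmaProduct.

Variables (T1 : Type) (le1 : T1 -> T1 -> Prop) (T2 : Type) (le2 : T2 -> T2 -> Prop).

Lemma sigma_prod_box_of_eventually_covers (W : sigmaP le1 * sigmaP le2 -> Prop)
  (C : sigmaP le1) (D : sigmaP le2)
  (N : nat -> sigmaP le1 -> Prop) (M : nat -> sigmaP le2 -> Prop) :
  scott_open (prod_le (@incl T1 le1) (@incl T2 le2)) W ->
  (forall A, (forall n, N n (A n)) -> eventually_covers (fun n => proj1_sig (A n)) (proj1_sig C)) ->
  (forall B, (forall n, M n (B n)) -> eventually_covers (fun n => proj1_sig (B n)) (proj1_sig D)) ->
  W (C, D) -> exists n, forall A B, N n A -> M n B -> W (A, B).
Proof.
  intros HW HN HM WCD. apply NNPP. intros Hno.
  assert (Hbad : forall n, exists p, N n (fst p) /\ M n (snd p) /\ ~ W p).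
  { intros n. apply NNPP. intros Hn. apply Hno. exists n. intros A B NA MB.
    apply NNPP. intros nW. apply Hn. exists (A, B). auto. }
  destruct (choice _ Hbad) as [p Hp].
  set (A := fun n => fst (p n)). set (B := fun n => snd (p n)).
  assert (HevA := HN A (fun n => proj1 (Hp n))).
  assert (HevB := HM B (fun n => proj1 (proj2 (Hp n)))).
  set (G := sigma_tail HevA). set (H := sigma_tail HevB).
  assert (Hdir : directed (prod_le (@incl T1 le1) (@incl T2 le2)) (range (fun n => (G n, H n)))).
  { apply directed_increasing. intros n m hnm.
    split; apply sigma_tail_increasing; exact hnm. }
  destruct (proj2 HW _ _ Hdir (is_sup_prod_range (is_sup_sigma_tail HevA) (is_sup_sigma_tail HevB))
              WCD) as [q [[n <-] WGH]].
  apply (proj2 (proj2 (Hp n))). rewrite (surjective_pairing (p n)).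
  apply (proj1 HW _ _ WGH). split; apply sigma_tail_incl.
Qed.

Lemma box_nbhd_of_enumerable_below (W : sigmaP le1 * sigmaP le2 -> Prop)
  (U C : sigmaP le1) (V D : sigmaP le2) :
  scott_open (prod_le (@incl T1 le1) (@incl T2 le2)) W ->
  incl C U -> incl D V -> enumerable (proj1_sig C) -> enumerable (proj1_sig D) -> W (C, D) ->
  box_nbhd (scott_open (@incl T1 le1)) (scott_open (@incl T2 le2)) W (U, V).
Proof.
  intros HW CU DV [e1 He1] [e2 He2] WCD.
  destruct (sigma_prod_box_of_eventually_covers
              (N := prefix_nbhd e1 (proj1_sig C)) (M := prefix_nbhd e2 (proj1_sig D)) HW
              (fun A HA => prefix_nbhd_eventually_covers He1 HA)
              (fun B HB => prefix_nbhd_eventually_covers He2 HB) WCD) as [n Hn].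
  exists (prefix_nbhd e1 (proj1_sig C) n), (prefix_nbhd e2 (proj1_sig D) n).
  split; [apply scott_open_prefix_nbhd | split; [apply scott_open_prefix_nbhd |]].
  split; [exact (prefix_nbhd_of_incl CU) | split; [exact (prefix_nbhd_of_incl DV) |]].
  exact Hn.
Qed.

Lemma box_nbhd_of_generic_l (W : sigmaP le1 * sigmaP le2 -> Prop)
  (U : sigmaP le1) (V : sigmaP le2) (x : T1) :
  scott_open (prod_le (@incl T1 le1) (@incl T2 le2)) W ->
  proj1_sig U x -> (forall A : sigmaP le1, proj1_sig A x -> incl U A) -> W (U, V) ->
  box_nbhd (scott_open (@incl T1 le1)) (scott_open (@incl T2 le2)) W (U, V).
Proof.
  intros HW Ux Hx WUV. exists (fun A => proj1_sig A x), (fun B => W (U, B)).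
  split; [apply scott_open_sigma_mem |].
  split; [exact (scott_open_section_r (incl_refl (A := U)) HW) |].
  split; [exact Ux | split; [exact WUV |]].
  intros A B Ax WUB. apply (proj1 HW (U, B)); [exact WUB |].
  split; [exact (Hx A Ax) | apply incl_refl].
Qed.

Lemma box_nbhd_of_generic_r (W : sigmaP le1 * sigmaP le2 -> Prop)
  (U : sigmaP le1) (V : sigmaP le2) (y : T2) :
  scott_open (prod_le (@incl T1 le1) (@incl T2 le2)) W ->
  proj1_sig V y -> (forall B : sigmaP le2, proj1_sig B y -> incl V B) -> W (U, V) ->
  box_nbhd (scott_open (@incl T1 le1)) (scott_open (@incl T2 le2)) W (U, V).
Proof.
  intros HW Vy Hy WUV. exists (fun A => W (A, V)), (fun B => proj1_sig B y).
  split; [exact (scott_open_section_l (incl_refl (A := V)) HW) |].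
  split; [apply scott_open_sigma_mem |].
  split; [exact WUV | split; [exact Vy |]].
  intros A B WAV By. apply (proj1 HW (A, V)); [exact WAV |].
  split; [apply incl_refl | exact (Hy B By)].
Qed.

End SigmaProduct.

Theorem theorem4p8 (P : Type) (leP : P -> P -> Prop) (Q : Type) (leQ : Q -> Q -> Prop)
  (hP : is_poset leP) (hQ : is_poset leQ)
  (oP : omega_type (scott_open leP)) (oQ : omega_type (scott_open leQ)) :
  forall W : sigmaP leP * sigmaP leQ -> Prop,
    product_topology (scott_open (@incl P leP)) (scott_open (@incl Q leQ)) W <->
    scott_open (prod_le (@incl P leP) (@incl Q leQ)) W.
Proof.
  intros W. split; [apply product_topology_scott_open |].
  intros HW [U V] WUV.
  destruct (sigma_enumerable_below_or_generic oP (scott_open_section_l (incl_refl (A := V)) HW) WUV)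
    as [[x [Ux Hx]] | [C [WCV [CU eC]]]].
  { exact (box_nbhd_of_generic_l HW Ux Hx WUV). }
  destruct (sigma_enumerable_below_or_generic oQ (scott_open_section_r (incl_refl (A := C)) HW) WCV)
    as [[y [Vy Hy]] | [D [WCD [DV eD]]]].
  - exact (box_nbhd_of_generic_r HW Vy Hy WUV).
  - exact (box_nbhd_of_enumerable_below HW CU DV eC eD WCD).
Qed.
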